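(* Let $G=(V,E)$ be a connected undirected graph with positive edge weights $w$, and run the distributed algorithm described in the context synchronously at every node. Then for every node $v\in V$ and every node $t\in V$, at any time after the first $\mathcal{D}(G)+1$ phases have been completed, the variable $S[v,t]$ at $v$ equals $\sigma_{v,t}$.
   Context: Graph notions. $G=(V,E)$ is connected, undirected, with weights $w(e)>0$; $N(v)$ is the set of neighbors of $v$ and $N[v]=N(v)\cup\{v\}$. The length of a path is the sum of its edge weights; $\mathrm{dist}(s,t)$ is the length of a shortest $s$–$t$ path. For $s\neq t$, $\mathrm{maxhop}(s,t)$ is the maximum number of edges of a shortest (minimum-length) $s$–$t$ path, $\mathrm{maxhop}(s,s)=0$, and $\mathcal{D}(G)=\max_{s,t\in V}\mathrm{maxhop}(s,t)$. $\sigma_{s,t}$ is the number of shortest $s$–$t$ paths, with $\sigma_{s,s}=1$. Algorithm (at each node $v$). Initialization: for all $t\in V$: $D[t]=+\infty$, $\mathrm{NH}[t]=\mathrm{PH}[t]=\emptyset$, and for all $u\in N[v]$: $B[u,t]=0$, $S[u,t]=0$; then $S[v,v]=1$, $D[v]=0$. Execution proceeds in synchronous phases; in each phase every node $v$ sends, for every $t\in V$, the message $(t,D[t],S[v,t],B[v,t])$ to every neighbor, receives all messages sent to it by its neighbors in that phase, and processes each of them (in arbitrary order) as follows. On receipt of $(t,d,s,b)$ from $u\in N(v)$: remove $u$ from $\mathrm{NH}[t]$ and from $\mathrm{PH}[t]$; if $d+w(\{u,v\})<D[t]$ set $D[t]\leftarrow d+w(\{u,v\})$; else if $d+w(\{u,v\})=D[t]$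 add $u$ to $\mathrm{NH}[t]$; else if $d-w(\{u,v\})=D[t]$ add $u$ to $\mathrm{PH}[t]$. Then set $S[u,t]\leftarrow s$, $B[u,t]\leftarrow b$; if $t\neq v$ set $S[v,t]\leftarrow\sum_{x\in\mathrm{NH}[t]}S[x,t]$; set $B[v,t]\leftarrow S[v,t]\cdot\sum_{x\in\mathrm{PH}[t]}\frac{B[x,t]+1}{S[x,t]}$ (a term with $S[x,t]=0$ is taken as $0$); finally set $C\leftarrow\sum_{x\neq v}B[v,x]$. *)

From HB Require Import structures.
From mathcomp Require Import all_boot all_order all_algebra.
Set Implicit Arguments. Unset Strict Implicit. Unset Printing Implicit Defensive.
Import Order.TTheory GRing.Theory Num.Theory.
Local Open Scope ring_scope.

Section Graph.
Variables (V : finType) (R : realFieldType).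
Variables (adj : rel V) (w : V -> V -> R).

Definition weighted_graph : Prop :=
  [/\ irreflexive adj, symmetric adj,
      (forall u v, w u v = w v u),
      (forall u v, adj u v -> 0 < w u v) &
      (forall s t, connect adj s t)].

Fixpoint plen (s : V) (p : seq V) : R :=
  if p is x :: q then w s x + plen x q else 0.

(* p is a (simple) path s = v0, v1, ..., vk = t, encoded by [:: v1; ...; vk] *)
Definition spath (s t : V) (p : seq V) : bool :=
  [&& path adj s p, last s p == t & uniq (s :: p)].

Fixpoint allseqs (n : nat) : seq (seq V) :=
  if n is n'.+1 then [::] :: [seq x :: q | x <- enum V, q <- allseqs n']
  else [:: [::]].

(* the (finite, duplicate-free) list of all simple s-t paths;
   a simple path has at most #|V| - 1 edges *)
Definition spaths (s t : V) : seq (seq V) :=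
  undup [seq p <- allseqs #|V| | spath s t p].

Definition shortest (s t : V) (p : seq V) : bool :=
  spath s t p && all (fun q => plen s p <= plen s q) (spaths s t).

Definition sigma (s t : V) : nat :=
  count (fun p => shortest s t p) (spaths s t).

Definition maxhop (s t : V) : nat :=
  \max_(p <- spaths s t | shortest s t p) size p.

Definition hopdiam : nat := \max_(st : V * V) maxhop st.1 st.2.

(* extended reals for D[t]: None stands for +infinity *)
Definition xadd (d : option R) (c : R) : option R := omap (fun x => x + c) d.
Definition xsub (d : option R) (c : R) : option R := omap (fun x => x - c) d.
Definition xlt (a b : option R) : bool :=
  match a, b with
  | Some x, Some y => x < y
  | Some _, None => true
  | None, _ => false
  end.

(* local state at a node v: D, NH, PH, S[u,t], B[u,t] (for u in N[v]), C *)
Record state := State {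
  Dv : V -> option R;
  NH : V -> {set V};
  PH : V -> {set V};
  Sv : V -> V -> R;
  Bv : V -> V -> R;
  Cv : R }.

Definition init (v : V) : state :=
  State (fun t => if t == v then Some 0 else None)
        (fun _ => set0) (fun _ => set0)
        (fun u t => if (u == v) && (t == v) then 1 else 0)
        (fun _ _ => 0) 0.

Definition upd1 (f : V -> option R) (t : V) (x : option R) : V -> option R :=
  fun y => if y == t then x else f y.
Definition upds (f : V -> {set V}) (t : V) (x : {set V}) : V -> {set V} :=
  fun y => if y == t then x else f y.
Definition upd2 (f : V -> V -> R) (u t : V) (x : R) : V -> V -> R :=
  fun a b => if (a == u) && (b == t) then x else f a b.

Definition process (v : V) (st : state) (u t : V) (d : option R) (s b : R)
  : state :=
  let nh0 := NH st t :\ u in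
  let ph0 := PH st t :\ u in
  let dw := xadd d (w u v) in
  let '(D1, nh1, ph1) :=
    if xlt dw (Dv st t) then (upd1 (Dv st) t dw, nh0, ph0)
    else if dw == Dv st t then (Dv st, u |: nh0, ph0)
    else if xsub d (w u v) == Dv st t then (Dv st, nh0, u |: ph0)
    else (Dv st, nh0, ph0) in
  let S1 := upd2 (Sv st) u t s in
  let B1 := upd2 (Bv st) u t b in
  let S2 := if t != v then upd2 S1 v t (\sum_(x in nh1) S1 x t) else S1 in
  let B2 := upd2 B1 v t
     (S2 v t * \sum_(x in ph1)
                 (if S2 x t == 0 then 0 else (B1 x t + 1) / S2 x t)) in
  State D1 (upds (NH st) t nh1) (upds (PH st) t ph1) S2 B2
        (\sum_(x | x != v) B2 v x).

Definition inbox (v : V) : seq (V * V) := [seq p <- enum {: V * V} | adj v p.1].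

(* a schedule fixes, for each phase k and each node v, the (arbitrary) order
   in which v processes the messages it receives in phase k+1 *)
Definition valid_schedule (sched : nat -> V -> seq (V * V)) : Prop :=
  forall k v, perm_eq (sched k v) (inbox v).

(* v processes the list of messages ms, sent by the nodes in global state sys *)
Definition process_msgs (sys : V -> state) (v : V) (st : state)
  (ms : seq (V * V)) : state :=
  foldl (fun st' p =>
           process v st' p.1 p.2 (Dv (sys p.1) p.2) (Sv (sys p.1) p.1 p.2)
                   (Bv (sys p.1) p.1 p.2)) st ms.

Fixpoint run (sched : nat -> V -> seq (V * V)) (k : nat) : V -> state :=
  if k is k'.+1 then
    let sys := run sched k' in fun v => process_msgs sys v (sys v) (sched k' v)
  else init.

(* state of v during phase k+1, after it has processed its first j messages
   (j = 0: after k phases; j >= size of the inbox: after k+1 phases) *)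
Definition state_at (sched : nat -> V -> seq (V * V)) (k j : nat) (v : V)
  : state :=
  let sys := run sched k in process_msgs sys v (sys v) (take j (sched k v)).

End Graph.

(* Shortest-path counts satisfy sigma(v,t) = sum of sigma(x,t) over the next
   hops x of v towards t, i.e. the neighbours with dist(x,t) + w(x,v) =
   dist(v,t), and every next hop has a strictly smaller maxhop(., t).
   After every single message a node keeps S[v,t] = sum_{x in NH[t]} S[x,t]
   and D[t] >= dist(v,t); after m phases D[t] is also at most the length of
   any v-t path with at most m edges, so it is exact once m >= maxhop(v,t).
   While D[t] is exact at v and at its next hops, the message of a neighbour
   x puts x into NH[t] exactly when x is a next hop and stores its S[x,t].
   By induction on m, once m > maxhop(v,t) phases are over, NH[t] and the
   stored S[x,t] at v are final, hence S[v,t] = sigma(v,t); in later phases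
   the messages come from such final states, so this persists mid-phase. *)
From HB Require Import structures.
From mathcomp Require Import all_boot all_order all_algebra.
From mathcomp Require Import lra.
Import Order.TTheory GRing.Theory Num.Theory.
Local Open Scope ring_scope.
Set Implicit Arguments. Unset Strict Implicit. Unset Printing Implicit Defensive.

Lemma seq_has_min (T : eqType) d (O : orderType d) (f : T -> O) (s : seq T) :
  s != [::] -> exists2 x, x \in s & all (fun y => (f x <= f y)%O) s.
Proof.
elim: s => [|a s IH] // _.
have [->|/IH [x xs minx]] := eqVneq s [::].
  by exists a; rewrite ?mem_head //= lexx.
have [le_ax|lt_xa] := leP (f a) (f x).
- exists a; rewrite ?mem_head //= lexx /=.
  by apply/allP => y ys; apply: le_trans le_ax (allP minx y ys).
- by exists x; rewrite ?inE ?xs ?orbT //= ltW.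
Qed.

Lemma count_uniq_mem (T : eqType) (P : pred T) s1 s2 : uniq s1 -> uniq s2 ->
  (forall x, P x -> (x \in s1) = (x \in s2)) -> count P s1 = count P s2.
Proof.
move=> u1 u2 e; rewrite -!size_filter; apply: perm_size.
apply: uniq_perm; rewrite ?filter_uniq // => x; rewrite !mem_filter.
by case Px: (P x) => //=; apply: e.
Qed.

Section Graph.
Variables (V : finType) (R : realFieldType) (adj : rel V) (w : V -> V -> R).
Hypothesis G : weighted_graph adj w.

Let adj_irr : irreflexive adj. Proof. by case: G. Qed.
Let adj_sym : symmetric adj. Proof. by case: G. Qed.
Let w_sym u v : w u v = w v u. Proof. by case: G. Qed.
Let w_gt0 u v : adj u v -> 0 < w u v. Proof. by case: G => _ _ _ + _; apply. Qed.

Let adj_neq u v : adj v u -> u != v.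
Proof. by apply: contraTneq => ->; rewrite adj_irr. Qed.

Local Notation plen := (plen w).
Local Notation spath := (spath adj).
Local Notation shortest := (shortest adj w).
Local Notation sigma := (sigma adj w).
Local Notation maxhop := (maxhop adj w).

Lemma plen_cat x p1 p2 : plen x (p1 ++ p2) = plen x p1 + plen (last x p1) p2.
Proof. by elim: p1 x => [|y p IH] x /=; rewrite ?add0r // IH addrA. Qed.

Lemma plen_ge0 x p : path adj x p -> 0 <= plen x p.
Proof.
elim: p x => [|y p IH] x //= /andP[axy pp].
by rewrite addr_ge0 ?IH // ltW // w_gt0.
Qed.

Lemma plen_gt0 x p : path adj x p -> p != [::] -> 0 < plen x p.
Proof.
case: p => [|y p] //= /andP[axy pp] _.
by rewrite ltr_wpDr ?plen_ge0 // w_gt0.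
Qed.

Lemma suffix_plen_lt x p v : path adj x p -> uniq (x :: p) -> v \in p ->
  exists q, [/\ path adj v q, uniq (v :: q), last v q = last x p &
                plen v q < plen x p].
Proof.
move=> pp up vp; case/splitPr: vp pp up => p1 p2.
rewrite -cat_rcons cat_path last_cat last_rcons => /andP[pp1 pp2] up.
exists p2; split => //.
  by move: up; rewrite cat_rcons /= cat_uniq => /andP[_ /and3P[]].
by rewrite plen_cat last_rcons ltrDr plen_gt0 //; case: (p1).
Qed.

Lemma mem_allseqs n p : (size p <= n)%N -> p \in allseqs V n.
Proof.
elim: n p => [|n IH] [|x p] //= hs.
rewrite inE; apply/orP; right.
by apply: (allpairs_f (fun x q => x :: q)); rewrite ?mem_enum // IH.
Qed.

Lemma mem_spaths s t p : (p \in spaths adj s t) = spath s t p.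
Proof.
rewrite /spaths mem_undup mem_filter andb_idr // => /and3P[_ _ up].
apply/mem_allseqs/ltnW.
by have := max_card (mem (s :: p)); rewrite (card_uniqP up).
Qed.

Lemma exists_spath s t : exists p, spath s t p.
Proof.
have /connectP [p pp ->] : connect adj s t by case: G.
have [q pq uq _] := shortenP pp.
by exists q; rewrite /spath pq uq eqxx.
Qed.

Lemma exists_shortest s t : exists p, shortest s t p.
Proof.
have [p0 sp0] := exists_spath s t.
have : spaths adj s t != [::].
  by apply: contraTneq sp0 => e; rewrite -mem_spaths e.
move=> /(seq_has_min (plen s)) [p ps minp].
by exists p; rewrite /shortest -mem_spaths ps.
Qed.

Definition dist s t := plen s (xchoose (exists_shortest s t)).

Lemma dist_le s t p : spath s t p -> dist s t <= plen s p.
Proof.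
have /andP[_ /allP minp] := xchooseP (exists_shortest s t).
by move=> sp; apply: minp; rewrite mem_spaths.
Qed.

Lemma shortestP s t p : shortest s t p = spath s t p && (plen s p == dist s t).
Proof.
apply/idP/andP => [/[dup] /andP[sp /allP minp] _ | [sp /eqP e]].
  split=> //; rewrite eq_le dist_le // andbT.
  have /andP[sp' _] := xchooseP (exists_shortest s t).
  by apply: minp; rewrite mem_spaths.
by rewrite /shortest sp; apply/allP => q; rewrite mem_spaths e; apply: dist_le.
Qed.

Lemma dist_ge0 s t : 0 <= dist s t.
Proof.
have /andP[/and3P[pp _ _] _] := xchooseP (exists_shortest s t).
exact: plen_ge0.
Qed.

Lemma dist_self v : dist v v = 0.
Proof.
apply/eqP; rewrite eq_le dist_ge0 andbT.
by apply: (@dist_le v v [::]); rewrite /spath /= eqxx.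
Qed.

Lemma dist_le_edge v u t : adj v u -> dist v t <= w u v + dist u t.
Proof.
move=> avu; have /andP[/and3P[pq /eqP lq uq] _] := xchooseP (exists_shortest u t).
rewrite /(dist u t); set q := xchoose _ in pq lq uq *.
have [|vq] := boolP (v \in u :: q).
  rewrite inE => /predU1P[vu|vq]; first by move: avu; rewrite vu adj_irr.
  have [r [pr ur lr ltr]] := suffix_plen_lt pq uq vq.
  have : dist v t <= plen v r by apply: dist_le; rewrite /spath pr ur lr lq eqxx.
  have : 0 < w v u by rewrite w_gt0 // adj_sym.
  by move: ltr; rewrite w_sym; lra.
have : dist v t <= plen v (u :: q).
  by apply: dist_le; rewrite /spath /= avu pq lq eqxx vq.
by rewrite /= w_sym.
Qed.

Definition next_hop t v x := adj v x && (dist x t + w x v == dist v t).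

Lemma next_hop_neq t v x : next_hop t v x -> v != t.
Proof.
case/andP=> avx /eqP e; apply/eqP => vt; move: e; rewrite vt dist_self.
have : 0 < w x t by rewrite w_gt0 // adj_sym -vt.
by have := dist_ge0 x t; lra.
Qed.

Lemma shortest_cons v t p : v != t ->
  shortest v t p =
  if p is x :: q then next_hop t v x && shortest x t q else false.
Proof.
move=> vt; case: p => [|x q]; first by rewrite shortestP /spath /= (negbTE vt).
rewrite !shortestP /spath /next_hop /=.
apply/idP/idP.
- move=> /andP[/and3P[/andP[avx pq] lq /andP[vq uq]] /eqP e].
  have le_dq : dist x t <= plen x q by apply: dist_le; rewrite /spath pq lq /= uq.
  have := dist_le_edge t avx; rewrite w_sym in e => le_edge.
  have {le_dq le_edge} dq : plen x q = dist x t.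
    by apply/eqP; rewrite eq_le le_dq; lra.
  by rewrite avx pq lq uq -e dq addrC !eqxx.
- move=> /and3P[/andP[avx /eqP e] /and4P[pq lq xq uq] /eqP e2].
  rewrite avx pq lq xq uq e2 w_sym addrC e eqxx !andbT /=.
  apply/negP; rewrite inE => /predU1P[vx | vq].
    by move: avx; rewrite vx adj_irr.
  have uxq : uniq (x :: q) by rewrite /= xq uq.
  have [r [pr ur lr ltr]] := suffix_plen_lt pq uxq vq.
  have : dist v t <= plen v r by apply: dist_le; rewrite /spath pr ur lr lq.
  have : 0 < w v x by rewrite w_gt0.
  by rewrite e2 in ltr; rewrite w_sym in e; lra.
Qed.

Lemma sigma_self v : sigma v v = 1%N.
Proof.
rewrite /sigma (@count_uniq_mem _ _ _ [:: [::]]) ?undup_uniq //=.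
  by rewrite shortestP /spath /= eqxx dist_self eqxx.
move=> p; rewrite mem_spaths inE shortestP => /andP[sp _]; rewrite sp.
case: p sp => [|x p] // /and3P[_ /eqP lp /= /andP[vp _]].
by move: vp; rewrite -lp /= mem_last.
Qed.

Lemma sigma_next_hops v t : v != t ->
  sigma v t = (\sum_(x | next_hop t v x) sigma x t)%N.
Proof.
move=> vt.
pose L := [seq x :: q | x <- enum (next_hop t v),
                        q <- [seq q <- spaths adj x t | shortest x t q]].
have uniqL : uniq L.
  apply: allpairs_uniq_dep => [||[x1 q1] [x2 q2] _ _ /= [-> ->]] //.
    exact: enum_uniq.
  by move=> x _; rewrite filter_uniq ?undup_uniq.
have memL p : (p \in L) = shortest v t p.
  rewrite (shortest_cons _ vt); apply/allpairsPdep/idP.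
    by move=> [x [q []]]; rewrite mem_enum mem_filter => hx /andP[sq _] ->; apply/andP.
  case: p => [|x q] // /andP[hx sq]; exists x, q.
  by rewrite mem_enum mem_filter sq mem_spaths; case/andP: sq.
rewrite /sigma (@count_uniq_mem _ _ _ L) ?undup_uniq //; last first.
  by move=> p sp; rewrite memL sp mem_spaths; case/andP: sp.
rewrite (@eq_in_count _ _ predT); last by move=> p; rewrite memL.
rewrite count_predT size_allpairs_dep sumnE big_map big_enum /=.
by apply: eq_bigr => x _; rewrite size_filter.
Qed.

Lemma size_shortest_le_maxhop s t p : shortest s t p -> (size p <= maxhop s t)%N.
Proof.
move=> sp; apply: (leq_bigmax_seq p) => //.
by rewrite mem_spaths; case/andP: sp.
Qed.

Lemma maxhop_next_hop_lt v t x : next_hop t v x -> (maxhop x t < maxhop v t)%N.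
Proof.
move=> hx; have vt := next_hop_neq hx.
have lt_maxhop q : shortest x t q -> (size q < maxhop v t)%N.
  move=> sq; apply: (@size_shortest_le_maxhop v t (x :: q)).
  by rewrite shortest_cons // hx sq.
have [q0 /lt_maxhop] := exists_shortest x t.
case: (maxhop v t) lt_maxhop => // m lt_maxhop _.
by apply/bigmax_leqP_seq => q _ /lt_maxhop.
Qed.

Lemma maxhop_le_hopdiam s t : (maxhop s t <= hopdiam adj w)%N.
Proof. exact: (leq_bigmax (s, t)). Qed.

Definition newD (D dw : option R) := if xlt dw D then dw else D.
Definition newNH (D dw : option R) (u : V) (N : {set V}) :=
  if ~~ xlt dw D && (dw == D) then u |: (N :\ u) else N :\ u.

Lemma process_D v st u t d s b t' :
  Dv (process w v st u t d s b) t' =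
  if t' == t then newD (Dv st t) (xadd d (w u v)) else Dv st t'.
Proof.
rewrite /process /newD; case: ifP => _ /=; first by rewrite /upd1.
by case: ifP => _ /=; [|case: ifP => _ /=]; case: eqP => // ->.
Qed.

Lemma process_NH v st u t d s b t' :
  NH (process w v st u t d s b) t' =
  if t' == t then newNH (Dv st t) (xadd d (w u v)) u (NH st t) else NH st t'.
Proof.
rewrite /process /newNH; case: ifP => _ /=; first by rewrite /upds.
by case: ifP => _ /=; [|case: ifP => _ /=]; rewrite /upds.
Qed.

Lemma process_S v st u t d s b :
  Sv (process w v st u t d s b) =
  let nh := newNH (Dv st t) (xadd d (w u v)) u (NH st t) in
  let S1 := upd2 (Sv st) u t s in
  if t != v then upd2 S1 v t (\sum_(x in nh) S1 x t) else S1.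
Proof.
rewrite /process /newNH; case: ifP => _ /=; first by [].
by case: ifP => _ /=; [|case: ifP => _ /=].
Qed.

Lemma process_NH_other v st u t d s b x t' : ~~ ((x == u) && (t' == t)) ->
  (x \in NH (process w v st u t d s b) t') = (x \in NH st t').
Proof.
rewrite process_NH; case: (eqVneq t' t) => [->|//]; rewrite andbT => xu.
by rewrite /newNH; case: ifP => _; rewrite !inE (negbTE xu).
Qed.

Lemma process_S_other v st u t d s b x t' : x != v ->
  Sv (process w v st u t d s b) x t' =
  if (x == u) && (t' == t) then s else Sv st x t'.
Proof.
by move=> xv; rewrite process_S /=; case: ifP => _ //; rewrite {1}/upd2 (negbTE xv).
Qed.

Definition node_invariant v (st : state V R) :=
  [/\ forall t x, x \in NH st t -> adj v x,
      forall t, t != v -> Sv st v t = \sum_(x in NH st t) Sv st x t,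
      Sv st v v = 1 &
      forall t d, Dv st t = Some d -> dist v t <= d].

Lemma mem_newNH_adj v D dw u (N : {set V}) x : adj v u -> {subset N <= adj v} ->
  x \in newNH D dw u N -> adj v x.
Proof.
move=> avu sub_N; rewrite /newNH; case: ifP => _; rewrite !inE.
  by case/predU1P => [-> //| /andP[_ /sub_N]].
by case/andP => _ /sub_N.
Qed.

Lemma process_invariant v st u t d s b : node_invariant v st -> adj v u ->
  (forall d', d = Some d' -> dist u t <= d') ->
  node_invariant v (process w v st u t d s b).
Proof.
move=> [NH_adj S_sum S_vv D_ge] avu d_ge; have uv := adj_neq avu.
split.
- move=> t' x; rewrite process_NH; case: eqP => _; last exact: NH_adj.
  by apply: mem_newNH_adj => // y; apply: NH_adj.
- move=> t' t'v; have [et|t't] := eqVneq t' t.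
    subst t'; rewrite process_S process_NH /= t'v /upd2 !eqxx !andbT /=.
    apply: eq_bigr => x xin.
    suff /adj_neq/negbTE -> : adj v x by [].
    by apply: mem_newNH_adj xin => // y; apply: NH_adj.
  have S_t' a : Sv (process w v st u t d s b) a t' = Sv st a t'.
    by rewrite process_S /=; case: ifP => _; rewrite /upd2 (negbTE t't) !andbF.
  rewrite process_NH (negbTE t't) S_t'; under eq_bigr do rewrite S_t'.
  exact: S_sum.
- rewrite process_S /=; case: ifP => tv; rewrite /upd2.
    by rewrite eqxx eq_sym (negbTE tv) /= eq_sym (negbTE uv) /= S_vv.
  by rewrite eq_sym (negbTE uv) /= S_vv.
- move=> t' d'; rewrite process_D; case: eqP => [->|_]; last exact: D_ge.
  rewrite /newD; case: ifP => _; last exact: D_ge.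
  case: d d_ge => [d0|] //= d_ge [<-].
  by have := dist_le_edge t avu; have := d_ge d0 erefl; lra.
Qed.

Definition xle (a b : option R) :=
  if b is Some y then (if a is Some x then x <= y else false) else true.

Lemma xle_refl a : xle a a.
Proof. by case: a => /=. Qed.

Lemma xle_trans a b c : xle a b -> xle b c -> xle a c.
Proof. by case: c => //= z; case: b => //= y; case: a => //= x; apply: le_trans. Qed.

Lemma newD_le D dw : xle (newD D dw) D.
Proof.
rewrite /newD; case: ifP => [|_]; last exact: xle_refl.
by case: D => [y|] //=; case: dw => [x|] //= /ltW.
Qed.

Lemma newD_le_msg D dw : xle (newD D dw) dw.
Proof.
rewrite /newD; case: ifP => [_|]; first exact: xle_refl.
by case: dw => [x|] //=; case: D => [y|] //= /negbT; rewrite -leNgt.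
Qed.

Lemma process_D_le v st u t d s b t' :
  xle (Dv (process w v st u t d s b) t') (Dv st t').
Proof. by rewrite process_D; case: eqP => [->|_]; [apply: newD_le | apply: xle_refl]. Qed.

Lemma process_D_le_msg v st u t d s b :
  xle (Dv (process w v st u t d s b) t) (xadd d (w u v)).
Proof. by rewrite process_D eqxx; apply: newD_le_msg. Qed.

Lemma process_next_hop v st u t d s b :
  Dv st t = Some (dist v t) -> adj v u ->
  (forall d', d = Some d' -> dist u t <= d') ->
  (next_hop t v u -> d = Some (dist u t)) ->
  Dv (process w v st u t d s b) t = Some (dist v t) /\
  (u \in NH (process w v st u t d s b) t) = next_hop t v u.
Proof.
move=> Dst avu d_ge d_hop; have le_edge := dist_le_edge t avu.
have not_lt : ~~ xlt (xadd d (w u v)) (Dv st t).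
  rewrite Dst; case: d d_ge {d_hop} => [d0|] //= d_ge.
  by rewrite -leNgt; have := d_ge d0 erefl; lra.
have eq_hop : (xadd d (w u v) == Some (dist v t)) = next_hop t v u.
  rewrite /next_hop avu /=; apply/idP/idP => [|hop].
    case: d d_ge {d_hop not_lt} => [d0|] //= d_ge /eqP [e].
    by apply/eqP; have := d_ge d0 erefl; lra.
  by rewrite d_hop /= ?(eqP hop) // /next_hop avu hop.
rewrite process_D process_NH eqxx /newD /newNH (negbTE not_lt) Dst eq_hop.
by split => //; case: (next_hop t v u); rewrite !inE ?eqxx.
Qed.

Local Notation process_msgs := (process_msgs w).

Definition D_sound (sys : V -> state V R) :=
  forall u t d, Dv (sys u) t = Some d -> dist u t <= d.

Lemma process_msgs_invariant sys v st ms :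
  node_invariant v st -> D_sound sys -> {in ms, forall p, adj v p.1} ->
  node_invariant v (process_msgs sys v st ms).
Proof.
elim: ms st => [|p ms IH] st //= inv_st D_ok ms_adj.
apply: IH => [|//| q qms]; last by apply: ms_adj; rewrite inE qms orbT.
apply: process_invariant => //; first by apply: ms_adj; rewrite mem_head.
by move=> d' /D_ok.
Qed.

Lemma process_msgs_D_le sys v st ms t :
  xle (Dv (process_msgs sys v st ms) t) (Dv st t).
Proof.
elim: ms st => [|p ms IH] st /=; first exact: xle_refl.
exact: xle_trans (IH _) (process_D_le _ _ _ _ _ _ _ _).
Qed.

Lemma process_msgs_D_le_msg sys v st ms u t : (u, t) \in ms ->
  xle (Dv (process_msgs sys v st ms) t) (xadd (Dv (sys u) t) (w u v)).
Proof.
elim: ms st => [|p ms IH] st //=; rewrite inE => /predU1P[<-|ums]; last exact: IH.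
exact: xle_trans (process_msgs_D_le _ _ _ _ _) (process_D_le_msg _ _ _ _ _ _ _).
Qed.

Definition settled (st : state V R) v t x :=
  (x \in NH st t) = next_hop t v x /\
  (next_hop t v x -> Sv st x t = (sigma x t)%:R).

Lemma settled_nonadj v st t x : node_invariant v st -> ~~ adj v x ->
  settled st v t x.
Proof.
case=> NH_adj _ _ _ nvx; rewrite /settled /next_hop (negbTE nvx).
by split=> //; apply: contraNF nvx => /NH_adj.
Qed.

Lemma sigma_of_settled v t st : node_invariant v st ->
  (forall x, settled st v t x) -> Sv st v t = (sigma v t)%:R.
Proof.
case=> _ S_sum S_vv _ hx; have [<-|vt] := eqVneq v t.
  by rewrite S_vv sigma_self.
rewrite S_sum 1?eq_sym // sigma_next_hops // natr_sum.
by apply: eq_big => x; case: (hx x) => // ->.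
Qed.

Lemma process_msgs_settled sys v t st ms :
  D_sound sys -> Dv st t = Some (dist v t) -> {in ms, forall p, adj v p.1} ->
  (forall x, next_hop t v x ->
     Dv (sys x) t = Some (dist x t) /\ Sv (sys x) x t = (sigma x t)%:R) ->
  (forall x, (x, t) \notin ms -> settled st v t x) ->
  forall x, settled (process_msgs sys v st ms) v t x.
Proof.
move=> D_ok + + sys_hop; elim: ms st => [|[u t'] ms IH] st Dst ms_adj st_ok /=.
  by move=> x; apply: st_ok.
have avu : adj v u by apply: (ms_adj (u, t')); rewrite mem_head.
set st1 := process _ _ _ _ _ _ _ _.
have st1_u : t' = t ->
    Dv st1 t = Some (dist v t) /\ (u \in NH st1 t) = next_hop t v u.
  by move=> et; subst t'; apply: process_next_hop => // [d /D_ok | /sys_hop[]].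
apply: IH => [|q qms|x xms].
- have [et|t't] := eqVneq t' t; first exact: (st1_u et).1.
  by rewrite /st1 process_D eq_sym (negbTE t't).
- by apply: ms_adj; rewrite inE qms orbT.
- have S_st1 : next_hop t v x -> Sv st1 x t = if (x, t) == (u, t') then
      Sv (sys u) u t' else Sv st x t.
    by case/andP => /adj_neq xv _; rewrite /st1 process_S_other // xpair_eqE.
  have [[ex et]|neq] := eqVneq (x, t) (u, t').
    subst x t'; split=> [|hop]; first by rewrite (st1_u erefl).2.
    by rewrite S_st1 // eqxx; case: (sys_hop u hop).
  have [NH_x S_x] : settled st v t x by apply: st_ok; rewrite inE negb_or neq.
  split=> [|hop]; last by rewrite S_st1 // (negbTE neq) S_x.
  by rewrite /st1 process_NH_other -?xpair_eqE.
Qed.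

Variable sched : nat -> V -> seq (V * V).
Hypothesis sched_ok : valid_schedule adj sched.

Local Notation run := (run w sched).

Lemma mem_sched k v p : (p \in sched k v) = adj v p.1.
Proof. by rewrite (perm_mem (sched_ok k v)) mem_filter mem_enum andbT. Qed.

Lemma run_invariant k v : node_invariant v (run k v).
Proof.
elim: k v => [|k IH] v /=.
  split=> [t x | t tv | | t d] /=; rewrite ?inE ?eqxx ?(negbTE tv) ?big_set0 //.
  by case: eqP => // -> [<-]; rewrite dist_self.
apply: process_msgs_invariant => [//||p]; last by rewrite mem_sched.
by move=> u t d; case: (IH u) => _ _ _; apply.
Qed.

Lemma run_D_sound k : D_sound (run k).
Proof. by move=> u t d; case: (run_invariant k u) => _ _ _; apply. Qed.

Lemma run_D_le_plen m v t p : spath v t p -> (size p <= m)%N ->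
  xle (Dv (run m v) t) (Some (plen v p)).
Proof.
elim: m v p => [|m IH] v [|x q] //; first by case/and3P=> _ /eqP /= <- _; rewrite /= eqxx.
  by move=> sp _; apply: xle_trans (process_msgs_D_le _ _ _ _ _) (IH _ _ sp _).
case/and3P=> /andP[avx pq] lq /andP[_ uq] /= size_q.
have : xle (Dv (run m x) t) (Some (plen x q)) by apply: IH => //; apply/and3P.
have : (x, t) \in sched m v by rewrite mem_sched.
move=> /(@process_msgs_D_le_msg (run m) v (run m v)); rewrite w_sym.
by case: (Dv (run m x) t) => [d|] //=; case: (Dv _ t) => [d'|] //=; lra.
Qed.

Lemma run_D_exact m v t : (maxhop v t <= m)%N -> Dv (run m v) t = Some (dist v t).
Proof.
move=> le_m; have [p sp] := exists_shortest v t.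
move: (sp); rewrite shortestP => /andP[spp /eqP plen_p].
have := run_D_le_plen spp (leq_trans (size_shortest_le_maxhop sp) le_m).
have := @run_D_sound m v t.
case: (Dv (run m v) t) => //= d ge_d le_d.
by congr Some; apply/eqP; rewrite eq_le ge_d // -plen_p le_d.
Qed.

Lemma run_settled k v t : (maxhop v t < k)%N -> forall x, settled (run k v) v t x.
Proof.
elim: k v => [//|m IH] v lt_m /=.
apply: process_msgs_settled => [||p|x hop|x].
- exact: run_D_sound.
- exact: run_D_exact.
- by rewrite mem_sched.
- have lt_x := leq_trans (maxhop_next_hop_lt hop) lt_m.
  split; first exact: run_D_exact (ltnW lt_x).
  exact: sigma_of_settled (run_invariant m x) (IH x lt_x).
- by rewrite mem_sched => /settled_nonadj; apply; apply: run_invariant.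
Qed.

Lemma run_sigma k v t : (maxhop v t < k)%N -> Sv (run k v) v t = (sigma v t)%:R.
Proof. by move/run_settled; apply: sigma_of_settled; apply: run_invariant. Qed.
End Graph.

Theorem lemma3 (V : finType) (R : realFieldType) (adj : rel V)
  (w : V -> V -> R) (sched : nat -> V -> seq (V * V)) :
  weighted_graph adj w ->
  valid_schedule adj sched ->
  forall (k j : nat) (v t : V),
    (hopdiam adj w + 1 <= k)%N ->
    Sv (state_at w sched k j v) v t = (sigma adj w v t)%:R.
Proof.
move=> G sched_ok k j v t; rewrite addn1 => lt_hopdiam.
have lt_k := leq_ltn_trans (maxhop_le_hopdiam adj w v t) lt_hopdiam.
have ms_adj : {in take j (sched k v), forall p, adj v p.1}.
  by move=> p /mem_take; rewrite (mem_sched sched_ok).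
rewrite /state_at; apply: sigma_of_settled.
  by apply: process_msgs_invariant => //; [apply: run_invariant | apply: run_D_sound].
apply: process_msgs_settled => [||//|x hop|x _].
- exact: run_D_sound.
- exact: run_D_exact (ltnW lt_k).
- have lt_x := ltn_trans (maxhop_next_hop_lt hop) lt_k.
  by split; [apply: run_D_exact (ltnW lt_x) | apply: run_sigma].
- exact: run_settled.
Qed.
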